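(* Let $\bm v_1,\dots,\bm v_N\in\mathbb{R}^r$, $\bm X := \mathsf{Gram}(\bm v_1,\dots,\bm v_N)$, and $\bm v := (\bm v_1;\dots;\bm v_N)\in\mathbb{R}^{rN}$. (a) If $\sum_{i=1}^N\|\bm v_i\|_2^2 = N$ and there exists $\bm M\in\mathcal{B}(N,r)$ with $\mathrm{rank}(\bm M) = r$ and $\bm v^\top\bm M\bm v = N^2$, then $\bm X\in\mathscr{C}^N$. (b) If $N\notin\{1,2\}$ and $N$ is not divisible by $4$, then $\bm I_N\in\mathscr{C}^N$ and $\bm I_N = \mathsf{Gram}(\bm e_1,\dots,\bm e_N)$ (standard basis of $\mathbb{R}^N$), but with $\bm v := (\bm e_1;\dots;\bm e_N)\in\mathbb{R}^{N^2}$ there is no $\bm M\in\mathcal{B}(N,N)$ with $\bm v^\top\bm M\bm v = N^2$ and $\mathrm{rank}(\bm M) = N$.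
   Context: $\mathscr{C}^N := \mathrm{conv}\{\bm x\bm x^\top : \bm x\in\{\pm1\}^N\}$ (the cut polytope). $\mathsf{Gram}$ denotes the Gram matrix, $(\bm v_1;\dots;\bm v_N)$ the concatenation. A matrix $\bm M \in \mathbb{R}^{rN\times rN}$ is viewed as an $N\times N$ array of $r\times r$ blocks, $\bm M_{[ij]}$ denoting block $(i,j)$. $\mathcal{B}(N,r)$ is the set of symmetric $\bm M \in \mathbb{R}^{rN\times rN}$ with $\bm M \succeq 0$, $\bm M_{[ii]} = \bm I_r$ for all $i$, and $\bm M_{[ij]} = \bm M_{[ij]}^\top$ for all $i,j$. *)

(* Real numbers are modelled by an arbitrary real closed field. *)
From HB Require Import structures.
From mathcomp Require Import all_boot all_order all_algebra.
Set Implicit Arguments. Unset Strict Implicit. Unset Printing Implicit Defensive.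
Import Order.TTheory GRing.Theory Num.Theory.
Local Open Scope ring_scope.

Section Defs.
Variable R : rcfType.

Definition psd n (M : 'M[R]_n) : Prop :=
  M^T = M /\ forall u : 'cV[R]_n, 0 <= (u^T *m M *m u) 0 0.

(* a (N*r)x(N*r) matrix viewed as an N x N array of r x r blocks;
   block (i,j) entry (a,b) sits at row i*r+a, column j*r+b *)
Definition blk N r (M : 'M[R]_(N * r)) (i j : 'I_N) : 'M[R]_r :=
  \matrix_(a < r, b < r) M (mxvec_index i a) (mxvec_index j b).

Definition calB N r (M : 'M[R]_(N * r)) : Prop :=
  psd M /\ (forall i, blk M i i = 1%:M) /\ (forall i j, (blk M i j)^T = blk M i j).

Definition gram N r (v : 'I_N -> 'cV[R]_r) : 'M[R]_N :=
  \matrix_(i, j) ((v i)^T *m v j) 0 0.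

Definition vcat N r (v : 'I_N -> 'cV[R]_r) : 'cV[R]_(N * r) :=
  (mxvec (\matrix_(i < N, a < r) v i a 0))^T.

Definition signv N (s : {ffun 'I_N -> bool}) : 'cV[R]_N :=
  \col_i (if s i then -1 else 1).

Definition cut_polytope N (X : 'M[R]_N) : Prop :=
  exists lam : {ffun 'I_N -> bool} -> R,
    (forall s, 0 <= lam s) /\ \sum_s lam s = 1 /\
    X = \sum_s lam s *: (signv s *m (signv s)^T).

Definition ebasis N (i : 'I_N) : 'cV[R]_N := delta_mx i 0.
End Defs.

From HB Require Import structures.
From mathcomp Require Import all_boot all_order all_algebra ring lra.
Set Implicit Arguments. Unset Strict Implicit. Unset Printing Implicit Defensive.
Import Order.TTheory GRing.Theory Num.Theory.
Local Open Scope ring_scope.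

(* (a) Let M be in B(N,r) with rank r and let P_j be the blocks of its
   first block row.  Rank r forces M = P^T P, so the P_j are symmetric,
   pairwise commuting involutions and v^T M v = |sum_j P_j v_j|^2.  With
   sum_j |v_j|^2 = N, the value N^2 is the equality case of Cauchy-Schwarz,
   which forces v_j = P_j u for a single unit vector u.  Decomposing u
   along the joint eigenspaces of the P_j, u = sum_s g_s with
   P_j g_s = sign(s_j) g_s, exhibits the Gram matrix of the v_j as the
   convex combination sum_s |g_s|^2 sign(s) sign(s)^T.

   (b) I_N is the uniform average of all x x^T.  If v = (e_1;...;e_N) had
   such an M, then in the decomposition of (a) every weight |g_s|^2 is
   0 or 1/N; a weighted representation of I_N by such weights forces
   4 | N, by looking at three fixed coordinates. *)

Section CutDecomposition.
Variable R : rcfType.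

Definition dot r (x y : 'cV[R]_r) : R := (x^T *m y) 0 0.

Lemma dotE r (x y : 'cV[R]_r) : dot x y = \sum_a x a 0 * y a 0.
Proof. by rewrite /dot mxE; apply: eq_bigr => a _; rewrite mxE. Qed.

Lemma dotC r (x y : 'cV[R]_r) : dot x y = dot y x.
Proof. by rewrite !dotE; apply: eq_bigr => a _; rewrite mulrC. Qed.

Lemma dot_sumr r I (s : seq I) (P : pred I) (x : 'cV[R]_r) (F : I -> 'cV[R]_r) :
  dot x (\sum_(i <- s | P i) F i) = \sum_(i <- s | P i) dot x (F i).
Proof. by rewrite /dot mulmx_sumr summxE. Qed.

Lemma dot_suml r I (s : seq I) (P : pred I) (x : 'cV[R]_r) (F : I -> 'cV[R]_r) :
  dot (\sum_(i <- s | P i) F i) x = \sum_(i <- s | P i) dot (F i) x.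
Proof. by rewrite dotC dot_sumr; apply: eq_bigr => i _; apply: dotC. Qed.

Lemma dotZr r c (x y : 'cV[R]_r) : dot x (c *: y) = c * dot x y.
Proof. by rewrite /dot -scalemxAr mxE. Qed.

Lemma dotZl r c (x y : 'cV[R]_r) : dot (c *: x) y = c * dot x y.
Proof. by rewrite dotC dotZr dotC. Qed.

Lemma dotBr r (x y z : 'cV[R]_r) : dot x (y - z) = dot x y - dot x z.
Proof. by rewrite /dot mulmxBr !mxE. Qed.

Lemma dotBl r (x y z : 'cV[R]_r) : dot (y - z) x = dot y x - dot z x.
Proof. by rewrite dotC dotBr !(dotC x). Qed.

Lemma dotMl r (A : 'M[R]_r) (x y : 'cV[R]_r) : dot (A *m x) y = dot x (A^T *m y).
Proof. by rewrite /dot trmx_mul mulmxA. Qed.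

Lemma dot_ge0 r (x : 'cV[R]_r) : 0 <= dot x x.
Proof. by rewrite dotE; apply: sumr_ge0 => a _; rewrite -expr2 sqr_ge0. Qed.

Lemma dot_eq0 r (x : 'cV[R]_r) : dot x x = 0 -> x = 0.
Proof.
rewrite dotE => /psumr_eq0P x2_eq0.
have {}x2_eq0 := x2_eq0 (fun a _ => sqr_ge0 (x a 0)).
apply/matrixP => a b; rewrite (ord1 b) [RHS]mxE.
by have /eqP := x2_eq0 a isT; rewrite mulf_eq0 orbb => /eqP.
Qed.

Definition sg (b : bool) : R := if b then -1 else 1.

Lemma sgK b : sg b * sg b = 1.
Proof. by case: b; rewrite /sg ?mulrNN mulr1. Qed.

Definition flip n (k : 'I_n) (s : {ffun 'I_n -> bool}) : {ffun 'I_n -> bool} :=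
  [ffun i => if i == k then ~~ s i else s i].

Lemma flipK n (k : 'I_n) : involutive (flip k).
Proof. by move=> s; apply/ffunP => i; rewrite !ffunE; case: eqP => // ->; rewrite negbK. Qed.

Lemma flip_neq n (k : 'I_n) s i : i != k -> flip k s i = s i.
Proof. by rewrite ffunE => /negbTE ->. Qed.

Lemma flip_eq n (k : 'I_n) s : flip k s k = ~~ s k.
Proof. by rewrite ffunE eqxx. Qed.

Lemma sum_flip_pairs (V : nmodType) n (k : 'I_n) (F : {ffun 'I_n -> bool} -> V) :
  \sum_s F s = \sum_(s : {ffun 'I_n -> bool} | ~~ s k) (F s + F (flip k s)).
Proof.
rewrite big_split /= (bigID (fun s : {ffun 'I_n -> bool} => ~~ s k)) /=.
congr (_ + _).
rewrite (reindex_inj (can_inj (flipK k))) /=.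
by apply: eq_bigl => s; rewrite flip_eq negbK.
Qed.

Lemma sum_sg_off n (i j : 'I_n) : i != j ->
  \sum_(s : {ffun 'I_n -> bool}) sg (s i) * sg (s j) = 0.
Proof.
move=> neq_ij; set S := \sum_s _.
suff : S = - S by move=> ?; lra.
rewrite {1}/S (reindex_inj (can_inj (flipK i))) -sumrN; apply: eq_bigr => s _.
rewrite flip_eq flip_neq 1?eq_sym //.
by case: (s i); case: (s j); rewrite /sg /=; ring.
Qed.

(* The projector onto the sign(b)-eigenspace of an involution A. *)
Definition eigproj r (A : 'M[R]_r) (b : bool) : 'M[R]_r :=
  2^-1 *: (1%:M + sg b *: A).

Lemma eigprojP r (A : 'M[R]_r) b :
  A *m A = 1%:M -> A *m eigproj A b = sg b *: eigproj A b.
Proof.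
move=> AA; rewrite /eigproj -scalemxAr mulmxDr mulmx1 -scalemxAr AA.
rewrite [RHS]scalerA mulrC -[RHS]scalerA; congr (_ *: _).
by rewrite scalerDr scalerA sgK scale1r addrC.
Qed.

Lemma eigproj_sum r (A : 'M[R]_r) : eigproj A false + eigproj A true = 1%:M.
Proof.
rewrite /eigproj /sg -scalerDr scale1r scaleN1r addrACA subrr addr0.
by rewrite -mulr2n -scaler_nat scalerA mulVf ?scale1r // pnatr_eq0.
Qed.

Lemma eigproj_comm r (A Q : 'M[R]_r) b :
  Q *m A = A *m Q -> Q *m eigproj A b = eigproj A b *m Q.
Proof.
move=> QA; rewrite /eigproj -scalemxAr -scalemxAl mulmxDr mulmxDl mulmx1 mul1mx.
by rewrite -!scalemxAr -scalemxAl QA.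
Qed.

Section JointEigen.
Variables (n r : nat) (P : 'I_n -> 'M[R]_r).
Hypothesis P_inv : forall i, P i *m P i = 1%:M.
Hypothesis P_comm : forall i j, P i *m P j = P j *m P i.

Lemma joint_eigen_prefix k : (k <= n)%N -> forall u : 'cV[R]_r,
  exists g : {ffun 'I_n -> bool} -> 'cV[R]_r,
    [/\ u = \sum_s g s,
        forall (i : 'I_n) s, (i < k)%N -> P i *m g s = sg (s i) *: g s &
        forall (s : {ffun 'I_n -> bool}) (i : 'I_n), (k <= i)%N -> s i -> g s = 0].
Proof.
elim: k => [_ u|k IH lt_kn u].
  exists (fun s => if s == [ffun => false] then u else 0); split=> //.
  - by rewrite -big_mkcond /= big_pred1_eq.
  - by move=> s i _ si; case: eqP => // s0; move: si; rewrite s0 ffunE.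
have [g [sum_g eig_g zero_g]] := IH (ltnW lt_kn) u.
pose kk : 'I_n := Ordinal lt_kn.
have neq_kk (i : 'I_n) : (i < k)%N || (k < i)%N -> i != kk.
  by move=> lt; apply/eqP => Ei; move: lt; rewrite Ei /= ltnn.
pose base (s : {ffun 'I_n -> bool}) := if s kk then flip kk s else s.
have base_neq s (i : 'I_n) : i != kk -> base s i = s i.
  by rewrite /base; case: (s kk) => // /flip_neq ->.
exists (fun s : {ffun 'I_n -> bool} => eigproj (P kk) (s kk) *m g (base s)); split.
- rewrite (sum_flip_pairs kk) sum_g (bigID (fun s : {ffun 'I_n -> bool} => ~~ s kk)) /=.
  rewrite [X in _ + X]big1 ?addr0 => [|s /negPn]; last exact: zero_g.
  apply: eq_bigr => s /negbTE skk; rewrite flip_eq skk /base skk flip_eq skk flipK.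
  by rewrite -mulmxDl eigproj_sum mul1mx.
- move=> i s; rewrite ltnS leq_eqVlt => /orP[/eqP ik | lt_ik].
    have -> : i = kk by apply: val_inj.
    by rewrite mulmxA eigprojP ?P_inv // scalemxAl.
  rewrite mulmxA (eigproj_comm _ (P_comm _ _)) -mulmxA eig_g // base_neq ?neq_kk ?lt_ik //.
  by rewrite scalemxAr.
- move=> s i lt_ki si; rewrite (zero_g _ i) ?mulmx0 ?(ltnW lt_ki) //.
  by rewrite base_neq // neq_kk // lt_ki orbT.
Qed.

Lemma joint_eigen (u : 'cV[R]_r) :
  exists g : {ffun 'I_n -> bool} -> 'cV[R]_r,
    u = \sum_s g s /\ forall i s, P i *m g s = sg (s i) *: g s.
Proof.
have [g [sum_g eig_g _]] := joint_eigen_prefix (leqnn n) u.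
by exists g; split=> // i s; apply: eig_g.
Qed.

End JointEigen.

Section EigenGram.
Variables (n r : nat) (P : 'I_n -> 'M[R]_r) (u : 'cV[R]_r).
Variable g : {ffun 'I_n -> bool} -> 'cV[R]_r.
Hypothesis P_sym : forall i, (P i)^T = P i.
Hypothesis sum_g : u = \sum_s g s.
Hypothesis eig_g : forall i s, P i *m g s = sg (s i) *: g s.

Lemma eig_orth s t : s != t -> dot (g s) (g t) = 0.
Proof.
move=> neq_st; have /existsP [i neq_i] : [exists i, s i != t i].
  apply: contraR neq_st => /existsPn eq_st; apply/eqP/ffunP => i.
  by move: (eq_st i) => /negPn/eqP.
have : sg (s i) * dot (g s) (g t) = sg (t i) * dot (g s) (g t).
  by rewrite -dotZl -eig_g dotMl P_sym eig_g dotZr.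
by move: neq_i; rewrite /sg; case: (s i); case: (t i) => // _ E; lra.
Qed.

Lemma dot_eig t : dot u (g t) = dot (g t) (g t).
Proof.
rewrite sum_g dot_suml (bigD1 t) //= big1 ?addr0 // => s; exact: eig_orth.
Qed.

Lemma sum_eig_weights : \sum_t dot (g t) (g t) = dot u u.
Proof. by rewrite {2}sum_g dot_sumr; apply: eq_bigr => t _; rewrite dot_eig. Qed.

Lemma dot_eig_images i j :
  dot (P i *m u) (P j *m u) = \sum_t dot (g t) (g t) * (sg (t i) * sg (t j)).
Proof.
rewrite dotMl P_sym mulmxA {2}sum_g !mulmx_sumr dot_sumr.
apply: eq_bigr => t _; rewrite -mulmxA eig_g -scalemxAr eig_g !dotZr dot_eig.
ring.
Qed.

End EigenGram.

Lemma cut_polytopeP N (X : 'M[R]_N) (lam : {ffun 'I_N -> bool} -> R) :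
  (forall s, 0 <= lam s) -> \sum_s lam s = 1 ->
  (forall i j, X i j = \sum_s lam s * (sg (s i) * sg (s j))) -> cut_polytope X.
Proof.
move=> lam_ge0 lam_sum1 X_ij; exists lam; split=> //; split=> //.
apply/matrixP => i j; rewrite X_ij summxE; apply: eq_bigr => s _.
by rewrite !mxE big_ord1 !mxE.
Qed.

Lemma involution_gram_cut n r (P : 'I_n -> 'M[R]_r) (u : 'cV[R]_r)
    (v : 'I_n -> 'cV[R]_r) :
  (forall i, (P i)^T = P i) -> (forall i, P i *m P i = 1%:M) ->
  (forall i j, P i *m P j = P j *m P i) ->
  dot u u = 1 -> (forall j, v j = P j *m u) -> cut_polytope (gram v).
Proof.
move=> P_sym P_inv P_comm u_unit v_E.
have [g [sum_g eig_g]] := joint_eigen P_inv P_comm u.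
apply: (@cut_polytopeP _ _ (fun t => dot (g t) (g t))) => [t||i j].
- exact: dot_ge0.
- by rewrite (sum_eig_weights P_sym sum_g eig_g) u_unit.
- by rewrite mxE -/(dot _ _) !v_E (dot_eig_images P_sym sum_g eig_g).
Qed.

Lemma sum_mxvec m n (F : 'I_(m * n) -> R) :
  \sum_k F k = \sum_i \sum_j F (mxvec_index i j).
Proof.
rewrite pair_big (reindex (uncurry (@mxvec_index m n))) /=.
  by apply: eq_bigr => -[i j].
have [f f_can can_f] := @curry_mxvec_bij m n.
by exists f => x _; [exact: f_can | exact: can_f].
Qed.

Lemma vcatE N r (v : 'I_N -> 'cV[R]_r) i a : vcat v (mxvec_index i a) 0 = v i a 0.
Proof. by rewrite /vcat mxE mxvecE mxE. Qed.

Section BlockStructure.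
Variables (N r : nat) (M : 'M[R]_(N * r)) (i0 : 'I_N).
Hypothesis M_B : calB M.
Hypothesis M_rank : \rank M = r.

(* The r rows of block row i0 contain an identity block, so they are
   independent; as rank M = r they span the row space of the symmetric
   matrix M, which yields M = U^T U for U the i0-th block row. *)
Lemma calB_factor x z :
  M x z = \sum_c M (mxvec_index i0 c) x * M (mxvec_index i0 c) z.
Proof.
move: M_B => [[M_sym _] [M_diag _]].
pose idx := @mxvec_index N r i0.
have M_ii a c : M (idx a) (idx c) = (a == c)%:R.
  by have := congr1 (fun A : 'M[R]_r => A a c) (M_diag i0); rewrite !mxE.
pose U : 'M[R]_(r, N * r) := \matrix_(c, y) M (idx c) y.
have sUM : (U <= M)%MS.
  apply/row_subP => c; have -> : row c U = row (idx c) M by apply/rowP => y; rewrite !mxE.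
  exact: row_sub.
pose S : 'M[R]_(N * r, r) := \matrix_(y, b) (y == idx b)%:R.
have US : U *m S = 1%:M.
  apply/matrixP => a b; rewrite !mxE (bigD1 (idx b)) //= big1 ?addr0.
    by rewrite !mxE eqxx mulr1 M_ii.
  by move=> y /negbTE neq_y; rewrite !mxE neq_y mulr0.
have rank_U : \rank U = r.
  apply/eqP; rewrite eqn_leq rank_leq_row /=.
  by rewrite -{1}(mxrank1 R r) -US mxrankM_maxl.
have /andP[_ sMU] : (U == M)%MS by rewrite -(mxrank_leqif_eq sUM).2 rank_U M_rank.
have [D M_DU] := submxP sMU.
have D_E w c : D w c = M w (idx c).
  rewrite M_DU !mxE (bigD1 c) //= big1 ?addr0; first by rewrite !mxE M_ii eqxx mulr1.
  by move=> a /negbTE neq_a; rewrite !mxE M_ii neq_a mulr0.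
rewrite {1}M_DU mxE; apply: eq_bigr => c _; rewrite D_E !mxE.
by rewrite -{1}M_sym mxE.
Qed.

Lemma blk_factor i j : blk M i j = (blk M i0 i)^T *m blk M i0 j.
Proof.
by apply/matrixP => a b; rewrite !mxE calB_factor; apply: eq_bigr => c _; rewrite !mxE.
Qed.

Lemma rowblk_sym j : (blk M i0 j)^T = blk M i0 j.
Proof. by case: M_B => _ [_]; apply. Qed.

Lemma rowblk_mul i j : blk M i0 i *m blk M i0 j = blk M i j.
Proof. by rewrite [RHS]blk_factor rowblk_sym. Qed.

Lemma rowblk_inv j : blk M i0 j *m blk M i0 j = 1%:M.
Proof. by rewrite rowblk_mul; case: M_B => _ [->]. Qed.

Lemma rowblk_comm i j : blk M i0 i *m blk M i0 j = blk M i0 j *m blk M i0 i.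
Proof.
case: M_B => _ [_ blk_sym].
by rewrite !rowblk_mul -[LHS]blk_sym blk_factor trmx_mul trmxK rowblk_sym rowblk_mul.
Qed.

Lemma calB_quadratic (v : 'I_N -> 'cV[R]_r) :
  ((vcat v)^T *m M *m vcat v) 0 0
  = dot (\sum_j blk M i0 j *m v j) (\sum_j blk M i0 j *m v j).
Proof.
pose vc x := vcat v x 0.
have w_E c : (\sum_j blk M i0 j *m v j) c 0
             = \sum_x M (mxvec_index i0 c) x * vc x.
  rewrite summxE sum_mxvec; apply: eq_bigr => j _; rewrite mxE.
  by apply: eq_bigr => a _; rewrite /vc vcatE mxE.
rewrite dotE; under eq_bigr do rewrite w_E mulr_suml.
under eq_bigr do under eq_bigr do rewrite mulr_sumr.
rewrite exchange_big mxE; apply: eq_bigr => x _.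
rewrite exchange_big mxE mulr_suml; apply: eq_bigr => y _.
rewrite calB_factor [(vcat v)^T _ _]mxE mulr_sumr mulr_suml.
by apply: eq_bigr => c _; rewrite /vc; ring.
Qed.

End BlockStructure.

(* Equality case of Cauchy-Schwarz: for orthogonal symmetric P_j,
   |sum_j P_j v_j|^2 <= N sum_j |v_j|^2, and when sum_j |v_j|^2 = N and
   the bound N^2 is attained, all P_j v_j equal one unit vector u. *)
Lemma orthogonal_sum_equality N r (P : 'I_N -> 'M[R]_r) (v : 'I_N -> 'cV[R]_r) :
  (0 < N)%N -> (forall j, (P j)^T = P j) -> (forall j, P j *m P j = 1%:M) ->
  \sum_j dot (v j) (v j) = N%:R ->
  dot (\sum_j P j *m v j) (\sum_j P j *m v j) = (expn N 2)%:R ->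
  exists u : 'cV[R]_r, dot u u = 1 /\ forall j, v j = P j *m u.
Proof.
move=> N_gt0 P_sym P_inv sum_v sum_Pv; set w := \sum_j P j *m v j in sum_Pv.
have N_neq0 : N%:R != 0 :> R by rewrite pnatr_eq0 -lt0n.
pose u := N%:R^-1 *: w.
have dist_E j : dot (P j *m v j - u) (P j *m v j - u)
    = dot (v j) (v j) - 2 * dot (P j *m v j) u + dot u u.
  rewrite dotBl !dotBr (dotC u (P j *m v j)) dotMl P_sym mulmxA P_inv mul1mx.
  ring.
have sum_dist : \sum_j dot (P j *m v j - u) (P j *m v j - u) = 0.
  rewrite (eq_bigr _ (fun j _ => dist_E j)) !big_split /= sumrN -mulr_sumr.
  rewrite -dot_suml -/w sumr_const card_ord sum_v /u !dotZr !dotZl sum_Pv natrX.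
  by rewrite -[_ *+ N]mulr_natr; field.
have Pv_E j : P j *m v j = u.
  apply/eqP; rewrite -subr_eq0; apply/eqP/dot_eq0.
  by move/psumr_eq0P: sum_dist; apply=> // i _; apply: dot_ge0.
have v_E j : v j = P j *m u by rewrite -(Pv_E j) mulmxA P_inv mul1mx.
exists u; split=> //.
have : \sum_j dot (v j) (v j) = N%:R * dot u u.
  under eq_bigr do rewrite v_E dotMl P_sym mulmxA P_inv mul1mx.
  by rewrite sumr_const card_ord mulr_natl.
by rewrite sum_v -{1}(mulr1 N%:R) => /(mulfI N_neq0).
Qed.

Lemma calB_representation N r (M : 'M[R]_(N * r)) (v : 'I_N -> 'cV[R]_r) (i0 : 'I_N) :
  calB M -> \rank M = r -> \sum_i dot (v i) (v i) = N%:R ->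
  ((vcat v)^T *m M *m vcat v) 0 0 = (expn N 2)%:R ->
  exists (P : 'I_N -> 'M[R]_r) (u : 'cV[R]_r),
    [/\ forall i, (P i)^T = P i, forall i, P i *m P i = 1%:M,
        forall i j, P i *m P j = P j *m P i, dot u u = 1 &
        forall j, v j = P j *m u].
Proof.
move=> M_B M_rank sum_v quad_v.
have N_gt0 : (0 < N)%N by apply: leq_ltn_trans (ltn_ord i0).
have [u [u_unit v_E]] := orthogonal_sum_equality N_gt0 (rowblk_sym i0 M_B)
  (rowblk_inv i0 M_B M_rank) sum_v (etrans (esym (calB_quadratic i0 M_B M_rank v)) quad_v).
exists (blk M i0), u; split=> //.
- exact: rowblk_sym.
- exact: rowblk_inv.
- exact: rowblk_comm.
Qed.

Lemma cut_polytope_dim0 (X : 'M[R]_0) : cut_polytope X.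
Proof.
apply: (@cut_polytopeP _ _ (fun _ => 1)) => [_||[]//].
- exact: ler01.
- by rewrite sumr_const card_ffun card_bool card_ord expn0.
Qed.

Lemma calB_gram_cut N r (v : 'I_N -> 'cV[R]_r) (M : 'M[R]_(N * r)) :
  \sum_i dot (v i) (v i) = N%:R -> calB M -> \rank M = r ->
  ((vcat v)^T *m M *m vcat v) 0 0 = (expn N 2)%:R -> cut_polytope (gram v).
Proof.
case: N v M => [|N] v M sum_v M_B M_rank quad_v; first exact: cut_polytope_dim0.
have [P [u [P_sym P_inv P_comm u_unit v_E]]] :=
  calB_representation ord0 M_B M_rank sum_v quad_v.
exact: involution_gram_cut P_sym P_inv P_comm u_unit v_E.
Qed.

Lemma dot_ebasis N (i : 'I_N) (x : 'cV[R]_N) : dot (ebasis R i) x = x i 0.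
Proof.
rewrite dotE (bigD1 i) //= big1 ?addr0 => [|k neq_ki]; rewrite /ebasis mxE.
  by rewrite !eqxx mul1r.
by rewrite (negbTE neq_ki) mul0r.
Qed.

Lemma gram_ebasis N : (1%:M : 'M[R]_N) = gram (@ebasis R N).
Proof.
apply/matrixP => i j; rewrite [RHS]mxE -/(dot _ _) dotC dot_ebasis /ebasis !mxE.
by rewrite andbT eq_sym.
Qed.

(* I_N is the uniform average of all the matrices x x^T, x in {+-1}^N. *)
Lemma identity_cut N : cut_polytope (1%:M : 'M[R]_N).
Proof.
have card_pos : (2 ^ N)%:R != 0 :> R by rewrite pnatr_eq0 expn_eq0.
have sum_const (c : R) : \sum_(s : {ffun 'I_N -> bool}) c = (2 ^ N)%:R * c.
  by rewrite sumr_const card_ffun card_bool card_ord mulr_natl.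
apply: (@cut_polytopeP _ _ (fun _ => (2 ^ N)%:R^-1)) => [_||i j].
- by rewrite invr_ge0 ler0n.
- by rewrite sum_const mulfV.
rewrite -mulr_sumr mxE; case: (eqVneq i j) => [<-|neq_ij].
  by under eq_bigr do rewrite sgK; rewrite sum_const mulr1 mulVf.
by rewrite sum_sg_off // mulr0.
Qed.

(* If the unit vectors e_j are P_j u as in part (a), every piece g_t of
   the joint eigendecomposition of u has coordinates sign(t_j) |g_t|^2,
   hence |g_t|^2 = N |g_t|^4: each weight is 0 or 1/N. *)
Lemma ebasis_eig_weights N (P : 'I_N -> 'M[R]_N) (u : 'cV[R]_N)
    (g : {ffun 'I_N -> bool} -> 'cV[R]_N) :
  (forall i, (P i)^T = P i) -> u = \sum_s g s ->
  (forall i s, P i *m g s = sg (s i) *: g s) ->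
  (forall j, ebasis R j = P j *m u) ->
  forall t, dot (g t) (g t) = 0 \/ N%:R * dot (g t) (g t) = 1.
Proof.
move=> P_sym sum_g eig_g e_E t; set lam := dot (g t) (g t).
have g_E j : g t j 0 = sg (t j) * lam.
  by rewrite -dot_ebasis e_E dotMl P_sym eig_g dotZr (dot_eig P_sym sum_g eig_g).
have lam_E : lam = N%:R * lam ^+ 2.
  rewrite {1}/lam dotE; under eq_bigr do rewrite g_E mulrACA sgK mul1r -expr2.
  by rewrite sumr_const card_ord mulr_natl.
have : lam * (1 - N%:R * lam) = 0 by rewrite mulrBr mulr1 mulrCA -expr2 -lam_E subrr.
by move/eqP; rewrite mulf_eq0 subr_eq0 => /orP[/eqP|/eqP]; [left|right].
Qed.

(* A representation of I_N as sum_t lam_t sign(t) sign(t)^T with weights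
   in {0, 1/N} forces 4 | N once N >= 3: testing against three fixed
   coordinates, N lam_t (1 + s0 s1)(1 + s0 s2) is 0 or 4 and sums to N. *)
Lemma quantized_identity_div4 N (lam : {ffun 'I_N -> bool} -> R) (i0 i1 i2 : 'I_N) :
  i0 != i1 -> i0 != i2 -> i1 != i2 ->
  (forall t, lam t = 0 \/ N%:R * lam t = 1) ->
  (forall i j, \sum_t lam t * (sg (t i) * sg (t j)) = (i == j)%:R) ->
  (4 %| N)%N.
Proof.
move=> n01 n02 n12 lam_E lam_id.
pose c t := (1 + sg (t i0) * sg (t i1)) * (1 + sg (t i0) * sg (t i2)).
have c_E t : lam t * c t = lam t * (sg (t i0) * sg (t i0))
   + lam t * (sg (t i0) * sg (t i1)) + lam t * (sg (t i0) * sg (t i2))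
   + lam t * (sg (t i1) * sg (t i2)).
  by rewrite /c /sg; case: (t i0); case: (t i1); case: (t i2); ring.
have sum_c : \sum_t lam t * c t = 1.
  rewrite (eq_bigr _ (fun t _ => c_E t)) !big_split /= !lam_id eqxx.
  by rewrite (negbTE n01) (negbTE n02) (negbTE n12) !addr0.
pose b t := [&& N%:R * lam t == 1, t i0 == t i1 & t i0 == t i2].
have Nc_E t : N%:R * (lam t * c t) = (4 * b t)%:R.
  rewrite /b; case: (lam_E t) => [-> | Nlam1].
    by rewrite !mul0r mulr0 eq_sym oner_eq0.
  rewrite mulrA Nlam1 mul1r eqxx /c /sg.
  by case: (t i0); case: (t i1); case: (t i2) => /=; ring.
have : N%:R = (\sum_t 4 * b t)%N%:R :> R.
  by rewrite natr_sum -(eq_bigr _ (fun t _ => Nc_E t)) -mulr_sumr sum_c mulr1.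
by move/eqP; rewrite eqr_nat -big_distrr /= => /eqP ->; rewrite dvdn_mulr.
Qed.

Lemma no_calB_for_ebasis N (M : 'M[R]_(N * N)) : (2 < N)%N -> ~~ (4 %| N)%N ->
  calB M -> \rank M = N ->
  ((vcat (@ebasis R N))^T *m M *m vcat (@ebasis R N)) 0 0 = (expn N 2)%:R -> False.
Proof.
move=> N_gt2 N_ndiv4 M_B M_rank quad_e.
pose i0 : 'I_N := Ordinal (ltn_trans (isT : 0 < 2)%N N_gt2).
pose i1 : 'I_N := Ordinal (ltn_trans (isT : 1 < 2)%N N_gt2).
pose i2 : 'I_N := Ordinal N_gt2.
have sum_e : \sum_(i < N) dot (ebasis R i) (ebasis R i) = N%:R :> R.
  by under eq_bigr do rewrite dot_ebasis mxE !eqxx; rewrite sumr_const card_ord.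
have [P [u [P_sym P_inv P_comm u_unit e_E]]] :=
  calB_representation i0 M_B M_rank sum_e quad_e.
have [g [sum_g eig_g]] := joint_eigen P_inv P_comm u.
move/negP: N_ndiv4; apply; apply: (@quantized_identity_div4 N _ i0 i1 i2) => //.
- exact: ebasis_eig_weights P_sym sum_g eig_g e_E.
move=> i j; rewrite -(dot_eig_images P_sym sum_g eig_g) -!e_E dot_ebasis.
by rewrite /ebasis mxE andbT eq_sym.
Qed.

End CutDecomposition.

Theorem proposition9 (R : rcfType) :
  (forall (N r : nat) (v : 'I_N -> 'cV[R]_r),
      \sum_(i < N) ((v i)^T *m v i) 0 0 = N%:R ->
      (exists M : 'M[R]_(N * r),
          calB M /\ \rank M = r /\
          ((vcat v)^T *m M *m vcat v) 0 0 = (expn N 2)%:R) ->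
      cut_polytope (gram v))
  /\
  (forall N : nat, N <> 1%N -> N <> 2%N -> ~~ (4 %| N)%N ->
      cut_polytope (1%:M : 'M[R]_N) /\
      (1%:M : 'M[R]_N) = gram (@ebasis R N) /\
      ~ (exists M : 'M[R]_(N * N),
            calB M /\
            ((vcat (@ebasis R N))^T *m M *m vcat (@ebasis R N)) 0 0 = (expn N 2)%:R /\
            \rank M = N)).
Proof.
split=> [N r v sum_v [M [M_B [M_rank quad_v]]] | N N_neq1 N_neq2 N_ndiv4].
  exact: calB_gram_cut sum_v M_B M_rank quad_v.
have N_gt2 : (2 < N)%N by case: N N_neq1 N_neq2 N_ndiv4 => [|[|[|]]].
split; first exact: identity_cut.
split; first exact: gram_ebasis.
move=> [M [M_B [quad_e M_rank]]].
exact: no_calB_for_ebasis N_gt2 N_ndiv4 M_B M_rank quad_e.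
Qed.
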